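(* Let $\mathcal{H}^S$ and $\mathcal{H}^A$ be $d$-dimensional Hilbert spaces with fixed orthonormal bases. There exists an isometry $W:\mathcal{H}^S\to\mathcal{H}^S\otimes\mathcal{H}^A$ such that for every state $\rho^S$ on $\mathcal{H}^S$, \[ \mathcal{L}_C(\rho^S)=\mathcal{L}_E(W\rho^SW^\dagger). \]
   Context: The coherence rank $R_C(|\psi\rangle)$ of a pure state $|\psi\rangle\in\mathcal{H}^S$ is the number of nonzero coefficients of $|\psi\rangle$ in the fixed basis; $\mathcal{L}_C(|\psi\rangle)=\log_2R_C(|\psi\rangle)$; for a state $\rho$, $\mathcal{L}_C(\rho)=\min\sum_ip_i\mathcal{L}_C(|\psi_i\rangle)$ over all pure-state decompositions $\rho=\sum_ip_i|\psi_i\rangle\langle\psi_i|$. For a bipartite pure state $|\psi^{SA}\rangle$ with Schmidt rank $r$, $\mathcal{L}_E(|\psi^{SA}\rangle)=\log_2r$, and for a bipartite state $\rho^{SA}$, $\mathcal{L}_E(\rho^{SA})=\min\sum_ip_i\mathcal{L}_E(|\psi_i^{SA}\rangle)$ over all pure-state decompositions of $\rho^{SA}$. *)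

From HB Require Import structures.
From mathcomp Require Import all_boot all_order all_algebra.
From mathcomp Require Import all_classical all_reals.
From mathcomp Require Import exp.
From mathcomp Require Import complex.
Set Implicit Arguments. Unset Strict Implicit. Unset Printing Implicit Defensive.
Import Order.TTheory GRing.Theory Num.Theory.
Local Open Scope ring_scope.
Local Open Scope classical_set_scope.

Section QDefs.
Variable R : realType.
Local Notation C := R[i].

Definition adjmx (m n : nat) (A : 'M[C]_(m, n)) : 'M[C]_(n, m) :=
  (map_mx (@conjc R) A)^T.

Definition log2 (x : R) : R := ln x / ln 2.

Definition is_state (m : nat) (rho : 'M[C]_m) : Prop :=
  (forall v : 'cV[C]_m, 0 <= (adjmx v *m rho *m v) 0 0) /\ \tr rho = 1.

Definition is_isometry (m n : nat) (W : 'M[C]_(m, n)) : Prop :=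
  adjmx W *m W = 1%:M.

Definition is_unit_vec (m : nat) (v : 'cV[C]_m) : Prop :=
  (adjmx v *m v) 0 0 = 1.

Definition pure_decomp (m : nat) (rho : 'M[C]_m) (k : nat)
  (p : 'I_k -> R) (psi : 'I_k -> 'cV[C]_m) : Prop :=
  [/\ forall i, 0 <= p i, \sum_i p i = 1, forall i, is_unit_vec (psi i)
    & rho = \sum_i (((p i)%:C)%C *: (psi i *m adjmx (psi i)))].

Definition convex_roof (m : nat) (f : 'cV[C]_m -> R) (rho : 'M[C]_m) : R :=
  inf [set x : R | exists k (p : 'I_k -> R) (psi : 'I_k -> 'cV[C]_m),
         pure_decomp rho p psi /\ x = \sum_i p i * f (psi i)].

Definition coh_rank (m : nat) (v : 'cV[C]_m) : nat :=
  #|[set i : 'I_m | v i 0 != 0]|.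

Definition LC_pure (m : nat) (v : 'cV[C]_m) : R := log2 (coh_rank v)%:R.
Definition LC (m : nat) (rho : 'M[C]_m) : R := convex_roof (@LC_pure m) rho.

(* Bipartite space H^S (x) H^A = C^(d*d), with basis |i>|j> at index
   mxvec_index i j.  The coefficient matrix of psi is M_ij = psi_(ij);
   the Schmidt rank of psi is the rank of M. *)
Definition coef_mx (d : nat) (psi : 'cV[C]_(d * d)) : 'M[C]_(d, d) :=
  vec_mx psi^T.
Definition schmidt_rank (d : nat) (psi : 'cV[C]_(d * d)) : nat :=
  \rank (coef_mx psi).

Definition LE_pure (d : nat) (v : 'cV[C]_(d * d)) : R :=
  log2 (schmidt_rank v)%:R.
Definition LE (d : nat) (rho : 'M[C]_(d * d)) : R :=
  convex_roof (@LE_pure d) rho.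

End QDefs.

(* The isometry W |j> = |j>|j> turns a pure state v into one whose coefficient
   matrix is diag(v), so its Schmidt rank is the coherence rank of v.  Since
   W rho W^dagger is supported on the range of W, the pure states of positive
   weight in any decomposition of it lie in that range, i.e. are images under W
   of pure states decomposing rho.  Pure-state decompositions of rho and of
   W rho W^dagger thus correspond, with equal averages of L_C and L_E. *)

From HB Require Import structures.
From mathcomp Require Import all_boot all_order all_algebra.
From mathcomp Require Import all_classical all_reals.
From mathcomp Require Import exp complex.
Set Implicit Arguments. Unset Strict Implicit. Unset Printing Implicit Defensive.
Import Order.TTheory GRing.Theory Num.Theory.
Local Open Scope ring_scope.

Lemma rank_diag_mx (F : fieldType) n (d : 'rV[F]_n) :
  \rank (diag_mx d) = (\sum_i (d 0%R i != 0%R))%N.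
Proof.
elim: n d => [|n IHn] d; first by rewrite big_ord0 thinmx0 mxrank0.
move: d; rewrite -[n.+1]/(1 + n)%N => d.
rewrite -[d]hsubmxK diag_mx_row rank_diag_block_mx IHn big_ord_recl.
congr addn; last first.
  apply: eq_bigr => i _.
  by rewrite (_ : lift 0 i = rshift 1 i) ?row_mxEr //; apply/val_inj.
have -> : row_mx (lsubmx d) (rsubmx d) 0 0 = lsubmx d 0 0.
  by rewrite (_ : 0 = lshift n (0 : 'I_1)) ?row_mxEl //; apply/val_inj.
have -> : diag_mx (lsubmx d) = (lsubmx d 0 0)%:M.
  by apply/matrixP => i j; rewrite !ord1 !mxE.
have [->|a_neq0] := eqVneq (lsubmx d 0 0) 0; first by rewrite raddf0 mxrank0.
by rewrite mxrank_unit // unitmxE det_scalar unitfE.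
Qed.

Section IsometricEmbedding.
Variable R : realType.
Local Notation C := R[i].

Lemma adjmxE m n (A : 'M[C]_(m, n)) i j : adjmx A i j = (A j i)^*%C.
Proof. by rewrite !mxE. Qed.

Lemma adjmxM m n p (A : 'M[C]_(m, n)) (B : 'M[C]_(n, p)) :
  adjmx (A *m B) = adjmx B *m adjmx A.
Proof. by rewrite /adjmx map_mxM trmx_mul. Qed.

Lemma adjmxK m n (A : 'M[C]_(m, n)) : adjmx (adjmx A) = A.
Proof. by apply/matrixP => i j; rewrite !adjmxE conjcK. Qed.

Lemma mulmx_sumZ m n p q k (A : 'M[C]_(m, n)) (c : 'I_k -> C)
    (X : 'I_k -> 'M[C]_(n, p)) (B : 'M[C]_(p, q)) :
  A *m (\sum_i c i *: X i) *m B = \sum_i c i *: (A *m X i *m B).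
Proof.
rewrite mulmx_sumr mulmx_suml; apply: eq_bigr => i _.
by rewrite scalemxAl -scalemxAr.
Qed.

Lemma mulmx_adjmx_diag m (x : 'cV[C]_m) j :
  (x *m adjmx x) j j = x j 0 * (x j 0)^*%C.
Proof. by rewrite mxE big_ord1 adjmxE. Qed.

Lemma outer_sum_eq0 m k (p : 'I_k -> R) (x : 'I_k -> 'cV[C]_m) :
  (forall i, 0 <= p i) -> \sum_i (p i)%:C%C *: (x i *m adjmx (x i)) = 0 ->
  forall i, p i != 0 -> x i = 0.
Proof.
move=> p_ge0 sum_eq0 i pi_neq0; apply/colP => j; rewrite mxE.
have /eqP := congr1 (fun M : 'M_m => M j j) sum_eq0.
rewrite summxE mxE psumr_eq0 => [/allP/(_ i (mem_index_enum _))|l _]; last first.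
  by rewrite mxE mulmx_adjmx_diag mulr_ge0 ?ler0c ?mulcJ_ge0.
rewrite /= mxE mulmx_adjmx_diag !mulf_eq0 conjc_eq0 orbb fmorph_eq0.
by rewrite (negPf pi_neq0) => /eqP.
Qed.

Lemma state_dim_gt0 m (rho : 'M[C]_m) : is_state rho -> (0 < m)%N.
Proof.
case: m rho => // rho [_]; rewrite /mxtrace big_ord0 => /eqP.
by rewrite eq_sym oner_eq0.
Qed.

Section Isometry.
Variables (m n : nat) (V : 'M[C]_(n, m)).
Hypothesis V_iso : is_isometry V.

Lemma isometry_unit_vec (v : 'cV[C]_m) :
  is_unit_vec (V *m v) <-> is_unit_vec v.
Proof.
by rewrite /is_unit_vec adjmxM mulmxA -(mulmxA (adjmx v)) V_iso mulmx1.
Qed.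

Lemma isometry_conjK (rho : 'M[C]_m) :
  adjmx V *m (V *m rho *m adjmx V) *m V = rho.
Proof. by rewrite !mulmxA V_iso mul1mx -mulmxA V_iso mulmx1. Qed.

Lemma pure_decomp_isometry (rho : 'M[C]_m) k p (psi : 'I_k -> 'cV[C]_m) :
  pure_decomp rho p psi ->
  pure_decomp (V *m rho *m adjmx V) p (fun i => V *m psi i).
Proof.
case=> p_ge0 p_sum psi_unit ->; split=> // [i|].
  exact/isometry_unit_vec.
by rewrite mulmx_sumZ; apply: eq_bigr => i _; rewrite adjmxM !mulmxA.
Qed.

(* The projection P = 1 - V V^dagger kills V rho V^dagger, hence every
   component of positive weight in P (V rho V^dagger) P^dagger. *)
Lemma pure_decomp_isometry_range (rho : 'M[C]_m) k p (phi : 'I_k -> 'cV[C]_n) :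
  pure_decomp (V *m rho *m adjmx V) p phi ->
  forall i, p i != 0 -> V *m (adjmx V *m phi i) = phi i.
Proof.
case=> p_ge0 _ _ rhoE i pi_neq0; set P := 1%:M - V *m adjmx V.
have PV0 : P *m V = 0 by rewrite mulmxBl mul1mx -mulmxA V_iso mulmx1 subrr.
suff /(outer_sum_eq0 p_ge0)/(_ i pi_neq0)/eqP :
    \sum_i (p i)%:C%C *: (P *m phi i *m adjmx (P *m phi i)) = 0.
  by rewrite mulmxBl mul1mx subr_eq0 mulmxA => /eqP.
transitivity (P *m (V *m rho *m adjmx V) *m adjmx P).
  by rewrite rhoE mulmx_sumZ; apply: eq_bigr => j _; rewrite adjmxM !mulmxA.
by rewrite !mulmxA PV0 !mul0mx.
Qed.

Lemma pure_decomp_isometry_pullback (m_gt0 : (0 < m)%N) (rho : 'M[C]_m)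
    k p (phi : 'I_k -> 'cV[C]_n) :
  pure_decomp (V *m rho *m adjmx V) p phi ->
  exists psi : 'I_k -> 'cV[C]_m,
    pure_decomp rho p psi /\ forall i, p i != 0 -> phi i = V *m psi i.
Proof.
move=> dec; have phiE := pure_decomp_isometry_range dec.
case: dec => p_ge0 p_sum phi_unit rhoE.
pose e : 'cV[C]_m := delta_mx (Ordinal m_gt0) 0.
have e_unit : is_unit_vec e.
  rewrite /is_unit_vec mxE (bigD1 (Ordinal m_gt0)) //= big1 ?addr0.
    by rewrite adjmxE !mxE eqxx conjc1 mul1r.
  by move=> j /negPf j_neq; rewrite !mxE j_neq mulr0.
exists (fun i => if p i == 0 then e else adjmx V *m phi i).
split=> [|i pi_neq0]; last by rewrite (negPf pi_neq0) phiE.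
split=> // [i|].
  case: ifPn => // pi_neq0; apply/isometry_unit_vec.
  by rewrite phiE //; exact: phi_unit.
rewrite -[LHS]isometry_conjK rhoE mulmx_sumZ; apply: eq_bigr => i _.
case: ifPn => [/eqP->|_]; first by rewrite rmorph0 !scale0r.
by rewrite adjmxM adjmxK !mulmxA.
Qed.

Lemma convex_roof_isometry (m_gt0 : (0 < m)%N) (f : 'cV[C]_m -> R)
    (g : 'cV[C]_n -> R) (rho : 'M[C]_m) :
  (forall v, g (V *m v) = f v) ->
  convex_roof g (V *m rho *m adjmx V) = convex_roof f rho.
Proof.
move=> gV; rewrite /convex_roof; congr inf; apply/seteqP; split=> x /=.
  move=> [k [p [phi [dec ->]]]].
  have [psi [dec' phiE]] := pure_decomp_isometry_pullback m_gt0 dec.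
  exists k, p, psi; split=> //; apply: eq_bigr => i _.
  by have [->|/phiE->] := eqVneq (p i) 0; rewrite ?mul0r ?gV.
move=> [k [p [psi [dec ->]]]].
exists k, p, (fun i => V *m psi i); split; first exact: pure_decomp_isometry.
by apply: eq_bigr => i _; rewrite gV.
Qed.

End Isometry.

Lemma mxvec_index_diag_eq d (a b : 'I_d) :
  (mxvec_index a a == mxvec_index b b) = (a == b).
Proof.
apply/eqP/eqP => [|-> //].
by rewrite /mxvec_index => /cast_ord_inj /enum_rank_inj [].
Qed.

Definition copy_mx d : 'M[C]_(d * d, d) :=
  \matrix_(k, j) (k == mxvec_index j j)%:R.

Lemma copy_mx_isometry d : is_isometry (copy_mx d).
Proof.
apply/matrixP => a b; rewrite mxE (bigD1 (mxvec_index a a)) //= big1 ?addr0.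
  by rewrite adjmxE !mxE eqxx conjc1 mul1r mxvec_index_diag_eq.
by move=> k /negPf k_neq; rewrite adjmxE mxE k_neq conjc0 mul0r.
Qed.

(* copy_mx maps |j> to |j>|j>, so copy_mx v has coefficient matrix diag(v). *)
Lemma copy_mx_mul d (v : 'cV[C]_d) :
  copy_mx d *m v = (mxvec (diag_mx v^T))^T.
Proof.
apply/colP => k; rewrite !mxE diag_mx_sum_delta linear_sum summxE.
apply: eq_bigr => j _; rewrite linearZ /= mxvec_delta !mxE.
by rewrite eqxx mulrC.
Qed.

Lemma coh_rankE d (v : 'cV[C]_d) : coh_rank v = (\sum_i (v i 0%R != 0%R))%N.
Proof.
rewrite /coh_rank -sum1_card [LHS]big_mkcond; apply: eq_bigr => i _ /=.
suff -> : (i \in [set j | v j 0 != 0]%classic) = (v i 0 != 0) by case: ifP.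
by apply/idP/idP; rewrite in_setE.
Qed.

Lemma schmidt_rank_copy d (v : 'cV[C]_d) :
  schmidt_rank (copy_mx d *m v) = coh_rank v.
Proof.
rewrite /schmidt_rank /coef_mx copy_mx_mul trmxK mxvecK rank_diag_mx coh_rankE.
by apply: eq_bigr => i _; rewrite mxE.
Qed.

End IsometricEmbedding.

Theorem proposition6 (R : realType) (d : nat) :
  exists W : 'M[R[i]]_(d * d, d),
    is_isometry W /\
    forall rho : 'M[R[i]]_d, is_state rho ->
      LC rho = LE (W *m rho *m adjmx W).
Proof.
exists (copy_mx R d); split=> [|rho rho_state]; first exact: copy_mx_isometry.
have d_gt0 := state_dim_gt0 rho_state.
rewrite /LC /LE; apply/esym/convex_roof_isometry => // [|v].
  exact: copy_mx_isometry.
by rewrite /LE_pure schmidt_rank_copy.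
Qed.
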